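(* Let $KL^2$ be a Klein bottle with a flat metric, let $\gamma$ be a closed geodesic on $KL^2$ with a self-intersection point $P$, and let $I\subsetneq\gamma$ be a proper sub-arc of $\gamma$ that starts and ends at $P$, so that $I$ is a closed loop. Then going once around $I$ changes local orientation. *)

From Stdlib Require Import Reals ZArith.
Open Scope R_scope.

(* Every flat Klein bottle is isometric to R^2 / Gamma(a,b), where Gamma(a,b)
   is generated by the glide reflection (x,y) |-> (x + a, -y) and the
   translation (x,y) |-> (x, y + b), a, b > 0.  Every element of Gamma(a,b)
   has the form  deck a b k m : (x,y) |-> (x + k a, (-1)^k y + m b). *)

Definition sgnZ (k : Z) : R := if Z.even k then 1 else -1.

Definition deck (a b : R) (k m : Z) (p : R * R) : R * R :=
  (fst p + IZR k * a, sgnZ k * snd p + IZR m * b).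

(* Determinant of the linear part diag(1, (-1)^k) of the deck transformation. *)
Definition deck_det (k : Z) : R := sgnZ k.

Definition kb_equiv (a b : R) (p q : R * R) : Prop :=
  exists k m : Z, q = deck a b k m p.

Definition geod_lift (p v : R * R) (u : R) : R * R :=
  (fst p + u * fst v, snd p + u * snd v).

Definition closed_geodesic (a b : R) (p v : R * R) (L : R) : Prop :=
  fst v * fst v + snd v * snd v = 1 /\ 0 < L /\
  (forall u, kb_equiv a b (geod_lift p v u) (geod_lift p v (u + L))) /\
  (forall T, 0 < T < L ->
     ~ (forall u, kb_equiv a b (geod_lift p v u) (geod_lift p v (u + T)))).

(* The loop gamma|[s,t] (closed since gamma(s) = gamma(t)) changes local
   orientation: the deck transformation carrying the start of its lift to the
   end of its lift (the holonomy of the loop) is orientation reversing. *)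
Definition loop_reverses_orientation (a b : R) (p v : R * R) (s t : R) : Prop :=
  forall k m : Z, deck a b k m (geod_lift p v s) = geod_lift p v t ->
    deck_det k < 0.

(* If the holonomy of the loop gamma|[s,t] preserved orientation, it would be a
   translation of R^2.  A translation carrying one point of the lifted geodesic
   to another shifts the whole line along itself, so gamma would be periodic
   with period t - s < L, contradicting the primitivity of gamma. *)

From Stdlib Require Import Reals ZArith Lra.
Open Scope R_scope.

Lemma sgnZ_cases (k : Z) : sgnZ k = 1 \/ sgnZ k = -1.
Proof. unfold sgnZ; destruct (Z.even k); [left | right]; reflexivity. Qed.

Lemma deck_translation_shifts_geod_lift (a b : R) (k m : Z) (p v : R * R)
  (s t : R) :
  sgnZ k = 1 ->
  deck a b k m (geod_lift p v s) = geod_lift p v t ->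
  forall u, geod_lift p v (u + (t - s)) = deck a b k m (geod_lift p v u).
Proof.
  intros Hk Hst u.
  destruct p as [p1 p2], v as [v1 v2].
  unfold deck, geod_lift in *; simpl in *; rewrite Hk in *.
  injection Hst as H1 H2.
  f_equal; nra.
Qed.

Lemma closed_geodesic_no_smaller_period (a b : R) (p v : R * R) (L T : R) :
  closed_geodesic a b p v L -> 0 < T < L ->
  ~ (forall u, kb_equiv a b (geod_lift p v u) (geod_lift p v (u + T))).
Proof. intros (_ & _ & _ & Hprim); exact (Hprim T). Qed.

Theorem proposition3 (a b : R) (ha : 0 < a) (hb : 0 < b)
  (p v : R * R) (L : R) (hgam : closed_geodesic a b p v L)
  (s t : R) (hs : 0 <= s) (hst : s < t) (htL : t < L)
  (hP : kb_equiv a b (geod_lift p v s) (geod_lift p v t)) :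
  loop_reverses_orientation a b p v s t.
Proof.
  intros k m Hhol; unfold deck_det.
  destruct (sgnZ_cases k) as [Hpres | Hrev]; [exfalso | lra].
  apply (closed_geodesic_no_smaller_period a b p v L (t - s) hgam); [lra |].
  intro u; exists k, m.
  exact (deck_translation_shifts_geod_lift a b k m p v s t Hpres Hhol u).
Qed.
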